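(* In any run of the MT algorithm, if $t_1<t_2$ are two resampling times, then the witness trees satisfy $\hat\tau^{t_1}\neq\hat\tau^{t_2}$.
   Context: Variable-assignment setting: variables $X_1,\dots,X_n$ with finite value sets, independent under product distribution $\Omega$. A bad-event is a finite set $B$ of pairs $(i,j)$ with distinct first coordinates (the event $\bigwedge_{(i,j)\in B}X_i=j$); $\mathcal B$ is a finite set of bad-events. $(i,j)\sim(i',j')$ iff $i=i'$, $j\ne j'$; $z\sim B$ iff some $z'\in B$ has $z\sim z'$; $i\sim B$ iff $(i,j)\in B$ for some $j$. $Y\subseteq\mathcal B$ is orderable to $E$ if $Y=\{E\}$ or $Y=\{B_1,\dots,B_s\}$ (distinct) can be ordered so that each $i$ has $z_i\in E$ with $z_i\sim B_i$ and $z_i\not\sim B_1,\dots,B_{i-1}$. MT algorithm: draw all variables from $\Omega$; while some bad-event is true, choose a true one $B$ and resample all $X_i$, $i\sim B$, from $\Omega$. Witness trees: with execution log $B_1,\dots,B_T$ (the resampled bad-events in order), $\hat\tau^t$ is built by starting with a root labeled $B_t$ and processing $B_{t-1},\dots,B_1$: a bad-event $B'$ is eligible for a node $v$ labeled $B$ whose children have distinct labels $C_1,\dots,C_r$ if $B'\notin\{C_1,\dots,C_r\}$ and $\{C_1,\dots,C_r,B'\}$ is orderable to $B$; if $B_{t'}$ is eligible for some node, it is added as a child of a deepest eligible node (ties broken arbitrarily), otherwise discarded. Trees are compared as rooted labeled trees. *)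

From HB Require Import structures.
From mathcomp Require Import all_boot.
From Stdlib Require List Permutation.

Set Implicit Arguments.
Unset Strict Implicit.
Unset Printing Implicit Defensive.

Section MT.

Variables (n : nat) (V : finType).

(* A bad-event: a finite set of pairs (i, j), meaning /\_{(i,j) in B} X_i = j. *)
Definition event := {set ('I_n * V)}.

Definition wf_event (B : event) : Prop :=
  forall z z', z \in B -> z' \in B -> z.1 = z'.1 -> z = z'.

Definition zsim (z z' : 'I_n * V) : bool := (z.1 == z'.1) && (z.2 != z'.2).

Definition zsimB (z : 'I_n * V) (B : event) : bool := [exists z', (z' \in B) && zsim z z'].

Definition varsim (i : 'I_n) (B : event) : bool := [exists j : V, (i, j) \in B].

Definition orderable (Y : {set event}) (E : event) : Prop :=
  Y = [set E] \/
  exists s : seq event,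
    [/\ uniq s, Y =i s &
        forall k, k < size s ->
          exists z, [/\ z \in E, zsimB z (nth set0 s k) &
                      forall l, l < k -> ~~ zsimB z (nth set0 s l)]].

Inductive tree : Type := Node of event & seq tree.

Definition label (t : tree) : event := let: Node a _ := t in a.

(* isomorphism of rooted labeled trees (children are unordered) *)
Inductive tiso : tree -> tree -> Prop :=
| tiso_node : forall a cs ds ds',
    Permutation.Permutation ds ds' -> List.Forall2 tiso cs ds' ->
    tiso (Node a cs) (Node a ds).

Fixpoint subtree (t : tree) (p : seq nat) : option tree :=
  match p with
  | [::] => Some t
  | k :: p' => let: Node _ cs := t in
               if k < size cs then subtree (nth t cs k) p' else None
  end.

Fixpoint add_child (t : tree) (p : seq nat) (b : event) : tree :=
  match p with
  | [::] => let: Node a cs := t in Node a (rcons cs (Node b [::]))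
  | k :: p' => let: Node a cs := t in
               Node a (set_nth t cs k (add_child (nth t cs k) p' b))
  end.

Definition eligible (t : tree) (p : seq nat) (b : event) : Prop :=
  exists a cs, [/\ subtree t p = Some (Node a cs),
                   b \notin map label cs &
                   orderable (b |: [set x in map label cs]) a].

(* processing one bad-event: attach it to a deepest eligible node
   (ties broken arbitrarily), or discard it if no node is eligible *)
Definition step (t : tree) (b : event) (t' : tree) : Prop :=
  (exists p, [/\ eligible t p b,
                 (forall q, eligible t q b -> size q <= size p) &
                 t' = add_child t p b])
  \/ ((forall p, ~ eligible t p b) /\ t' = t).

Fixpoint process (t : tree) (bs : seq event) (t' : tree) : Prop :=
  match bs with
  | [::] => t' = t
  | b :: bs' => exists tm, step t b tm /\ process tm bs' t'
  end.

(* tau is a possible witness tree \hat\tau^t for the log B_1, B_2, ... (log k = B_k):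
   root labeled B_t, then process B_{t-1}, ..., B_1 *)
Definition witness_tree (log : nat -> event) (t : nat) (tau : tree) : Prop :=
  process (Node (log t) [::]) [seq log k | k <- rev (iota 1 t.-1)] tau.

(* A run of the MT algorithm with T resamplings:
   sigma 0 = initial assignment, sigma t = assignment after the t-th resampling,
   log t = B_t the bad-event resampled at step t. *)
Definition mt_run (vals : 'I_n -> {set V}) (Bs : {set event})
    (sigma : nat -> 'I_n -> V) (log : nat -> event) (T : nat) : Prop :=
  (forall t, t <= T -> forall i, sigma t i \in vals i) /\
  (forall t, 1 <= t <= T ->
     [/\ log t \in Bs,
         (forall z, z \in log t -> sigma t.-1 z.1 = z.2) &
         (forall i, ~~ varsim i (log t) -> sigma t i = sigma t.-1 i)]).

End MT.

From mathcomp Require Import all_boot zify.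
From Stdlib Require List Permutation.
Set Implicit Arguments.
Unset Strict Implicit.

(** Processing a bad-event [b] is injective up to isomorphism.  Every leaf
    labelled [b] is eligible for [b], because [{b}] is orderable to [b].  Hence
    when [b] is attached below a deepest eligible node, at depth [d], the new
    leaf is a [b]-leaf at depth [d+1] and no [b]-leaf lies deeper: [d+1] is
    recovered as the largest depth of a [b]-leaf, and pruning the [b]-leaves at
    that depth gives back the old tree; both respect isomorphism.  If [b] is
    discarded, the tree has no [b]-leaf at all.
    Were the witness trees at times [t1 < t2] isomorphic, peeling off the common
    processing of [B_(t1-1), ..., B_1] would make the one-node tree labelled
    [B_t1] isomorphic to the result of processing [B_t1] on some tree; but that
    result has a [B_t1]-leaf of positive depth, or none at all. *)

Lemma Permutation_has (T : Type) (p : pred T) (s1 s2 : seq T) :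
  Permutation.Permutation s1 s2 -> has p s1 = has p s2.
Proof. by elim=> //= [x ? ? _ -> | x y s | ? ? ? _ -> _ ->] //; rewrite orbCA. Qed.

Lemma Permutation_filter (T : Type) (p : pred T) (s1 s2 : seq T) :
  Permutation.Permutation s1 s2 ->
  Permutation.Permutation (filter p s1) (filter p s2).
Proof.
elim=> /= [|x ? ? _ IH | x y s | ? ? ? _ IH1 _ IH2].
- exact: Permutation.perm_nil.
- by case: (p x) => //; apply: Permutation.perm_skip.
- case: (p x); case: (p y);
    by [apply: Permutation.perm_swap | apply: Permutation.Permutation_refl].
- exact: Permutation.perm_trans IH1 IH2.
Qed.

Lemma Forall2_has (A B : Type) (R : A -> B -> Prop) (p : pred A) (q : pred B) s1 s2 :
  (forall x y, R x y -> p x = q y) -> List.Forall2 R s1 s2 -> has p s1 = has q s2.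
Proof. by move=> hpq; elim=> //= x y ? ? /hpq -> _ ->. Qed.

Lemma Forall2_filter (A B : Type) (R : A -> B -> Prop) (p : pred A) (q : pred B) s1 s2 :
  (forall x y, R x y -> p x = q y) -> List.Forall2 R s1 s2 ->
  List.Forall2 R (filter p s1) (filter q s2).
Proof.
move=> hpq; elim=> //= x y ? ? hxy _ IH; rewrite (hpq _ _ hxy).
by case: (q y) => //; apply: List.Forall2_cons.
Qed.

Lemma Forall2_map (A B A' B' : Type) (R : A -> B -> Prop) (S : A' -> B' -> Prop)
    (f : A -> A') (g : B -> B') s1 s2 :
  (forall x y, R x y -> S (f x) (g y)) -> List.Forall2 R s1 s2 ->
  List.Forall2 S (map f s1) (map g s2).
Proof. by move=> hfg; elim=> //= x y ? ? /hfg hxy _ IH; apply: List.Forall2_cons. Qed.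

Lemma has_set_nth (T : Type) (p : pred T) x0 s k y :
  k < size s -> has p (set_nth x0 s k y) -> has p s || p y.
Proof.
move=> hk; rewrite set_nthE hk -{3}(cat_take_drop k s) (drop_nth x0 hk) !has_cat /=.
by case: (p y); rewrite ?orbT //= orbF => /orP [-> // | ->]; rewrite !orbT.
Qed.

Lemma has_set_nthr (T : Type) (p : pred T) x0 s k y :
  k < size s -> p y -> has p (set_nth x0 s k y).
Proof. by move=> hk py; rewrite set_nthE hk has_cat /= py orbT. Qed.

Lemma map_set_nth (T1 T2 : Type) (f : T1 -> T2) x0 s k y :
  map f (set_nth x0 s k y) = set_nth (f x0) (map f s) k (f y).
Proof. by elim: s k => [|x s IH] [|k] //=; [elim: k => //= k -> | rewrite IH]. Qed.

Lemma set_nth_nth (T : Type) (x0 y0 : T) s k :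
  k < size s -> set_nth x0 s k (nth y0 s k) = s.
Proof. by elim: s k => [|x s IH] [|k] //= /IH ->. Qed.

Section WitnessTrees.
Variables (n : nat) (V : finType).
Local Notation tree := (tree n V).
Local Notation event := (event n V).

Definition tree_ind_nth (P : tree -> Prop)
    (IH : forall a cs, (forall x0 i, i < size cs -> P (nth x0 cs i)) -> P (Node a cs)) :
    forall t, P t :=
  fix F t := let: Node a cs := t in IH a cs
    ((fix G (l : seq tree) : forall x0 i, i < size l -> P (nth x0 l i) :=
        match l with
        | [::] => fun x0 i hi => False_ind _ (Bool.diff_false_true hi)
        | c :: l' => fun x0 i =>
            match i return i < size (c :: l') -> P (nth x0 (c :: l') i) with
            | 0 => fun=> F c
            | i'.+1 => G l' x0 i'
            end
        end) cs).

Lemma tiso_ind_rec (P : tree -> tree -> Prop) :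
  (forall a cs ds ds', Permutation.Permutation ds ds' ->
     List.Forall2 (fun x y => tiso x y /\ P x y) cs ds' -> P (Node a cs) (Node a ds)) ->
  forall t u, tiso t u -> P t u.
Proof.
move=> IH; fix F 3 => t u [a cs ds ds' hp hf]; apply: IH hp _.
elim: hf => [|x y l l' hxy _ IHl]; constructor => //; split => //; exact: F.
Qed.

Section Leaves.
Variable b : event.

Fixpoint has_leaf_at (t : tree) (d : nat) {struct t} : bool :=
  let: Node a cs := t in
  if d is d'.+1 then has (fun c => has_leaf_at c d') cs else nilp cs && (a == b).

(* Removes the leaves labelled [b] at depth [d.+1]. *)
Fixpoint prune_leaves (d : nat) (t : tree) {struct t} : tree :=
  let: Node a cs := t in
  if d is d'.+1 then Node a (map (prune_leaves d') cs)
  else Node a (filter (fun c => ~~ has_leaf_at c 0) cs).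

Lemma has_leaf_at_child a cs x0 i d :
  i < size cs -> has_leaf_at (nth x0 cs i) d -> has_leaf_at (Node a cs) d.+1.
Proof. by move=> hi hd; apply/(has_nthP x0); exists i. Qed.

Lemma has_leaf_at_tiso t u : tiso t u -> has_leaf_at t =1 has_leaf_at u.
Proof.
elim/tiso_ind_rec=> a cs ds ds' hp hf [|d] /=.
  have e1 : size ds = size ds' := Permutation.Permutation_length hp.
  have e2 : size cs = size ds' := List.Forall2_length hf.
  by rewrite /nilp e1 -e2.
by rewrite (Permutation_has _ hp); apply: Forall2_has hf => x y [_ ->].
Qed.

Lemma prune_leaves_tiso t u d : tiso t u -> tiso (prune_leaves d t) (prune_leaves d u).
Proof.
move=> h; elim/tiso_ind_rec: t u / h d => a cs ds ds' hp hf [|d] /=.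
  apply: tiso_node (Permutation_filter _ hp) _.
  apply: (List.Forall2_impl _ (fun x y => @proj1 (tiso x y) _)).
  by apply: Forall2_filter hf => x y [/has_leaf_at_tiso ->].
apply: tiso_node (Permutation.Permutation_map _ hp) _.
by apply: Forall2_map hf => x y [].
Qed.

Lemma has_leaf_at_subtree t d :
  has_leaf_at t d -> exists2 q, size q = d & subtree t q = Some (Node b [::]).
Proof.
elim/tree_ind_nth: t d => a cs IH [|d] /=.
  by case: cs IH => //= _ /eqP ->; exists [::].
case/(has_nthP (Node a cs)) => i hi /(IH _ _ hi) [q <- hq].
by exists (i :: q); rewrite //= hi.
Qed.

Lemma has_leaf_at_eligible t d :
  has_leaf_at t d -> exists2 q, size q = d & eligible t q b.
Proof.
case/has_leaf_at_subtree => q hq hs; exists q => //; exists b, [::]; split => //.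
by left; apply/setP => x; rewrite !inE orbF.
Qed.

Lemma has_leaf_at_add_child t p x :
  subtree t p = Some x -> has_leaf_at (add_child t p b) (size p).+1.
Proof.
elim: p t x => [|k p IH] [a cs] x /=; first by rewrite has_rcons /= eqxx.
by case: ifP => // hk /IH h; apply: has_set_nthr.
Qed.

Lemma has_leaf_at_add_child_inv t p x d :
  subtree t p = Some x -> has_leaf_at (add_child t p b) d ->
  has_leaf_at t d || (d == (size p).+1).
Proof.
elim: p t x d => [|k p IH] [a cs] x [|d] /=.
- by rewrite /nilp size_rcons.
- by rewrite has_rcons; case: d => [|d] /=; rewrite ?orbT // orbF.
- by case: ifP => // hk _; rewrite /nilp size_set_nth gtn_eqF // leq_max.
case: ifP => // hk hs /(has_set_nth hk) /orP [-> // | /(IH _ _ _ hs) /orP [hd | /eqP ->]].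
  by move: (has_leaf_at_child a hk hd) => /= ->.
by rewrite eqxx orbT.
Qed.

Lemma prune_leaves_id t d : ~~ has_leaf_at t d.+1 -> prune_leaves d t = t.
Proof.
elim/tree_ind_nth: t d => a cs IH [|d] h /=; congr Node.
  by apply/all_filterP; rewrite all_predC.
apply: (@eq_from_nth _ (Node a cs)); rewrite size_map // => i hi.
rewrite (nth_map (Node a cs)) // IH //.
by apply: contra h; apply: has_leaf_at_child.
Qed.

Lemma prune_leaves_add_child t p x :
  subtree t p = Some x -> ~~ has_leaf_at t (size p).+1 ->
  prune_leaves (size p) (add_child t p b) = t.
Proof.
elim: p t x => [|k p IH] [a cs] x /=.
  move=> _ h; rewrite filter_rcons /= eqxx /=.
  exact: (@prune_leaves_id (Node a cs) 0 h).
case: ifP => // hk hs h.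
have [hcs] : Node a (map (prune_leaves (size p)) cs) = Node a cs.
  exact: (@prune_leaves_id (Node a cs) (size p).+1 h).
congr Node; rewrite map_set_nth hcs (IH _ _ hs).
  exact: set_nth_nth.
by apply: contra h; apply: (has_leaf_at_child a hk).
Qed.

Lemma add_child_deepest t p :
  eligible t p b -> (forall q, eligible t q b -> size q <= size p) ->
  [/\ has_leaf_at (add_child t p b) (size p).+1,
      forall d, has_leaf_at (add_child t p b) d -> d <= (size p).+1 &
      prune_leaves (size p) (add_child t p b) = t].
Proof.
move=> [a [cs [hs _ _]]] hmax.
have hdeep d : has_leaf_at t d -> d <= size p.
  by case/has_leaf_at_eligible => q <- /hmax.
split; first exact: has_leaf_at_add_child hs.
  by move=> d /(has_leaf_at_add_child_inv hs) /orP [/hdeep /leqW | /eqP ->].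
by apply: prune_leaves_add_child hs _; apply/negP => /hdeep; rewrite ltnn.
Qed.

Lemma step_tiso_inj t1 t2 u1 u2 :
  step t1 b u1 -> step t2 b u2 -> tiso u1 u2 -> tiso t1 t2.
Proof.
case=> [[p1 [he1 hm1 ->]] | [hn1 ->]]; case=> [[p2 [he2 hm2 ->]] | [hn2 ->]] hiso;
  have hl := has_leaf_at_tiso hiso.
- have [new1 deep1 <-] := add_child_deepest he1 hm1.
  have [new2 deep2 <-] := add_child_deepest he2 hm2.
  have -> : size p1 = size p2.
    have le12 := deep2 _ (etrans (esym (hl _)) new1).
    have le21 := deep1 _ (etrans (hl _) new2).
    exact/anti_leq/andP.
  exact: prune_leaves_tiso.
- have [new1 _ _] := add_child_deepest he1 hm1.
  by have [q _ /hn2] := @has_leaf_at_eligible t2 _ (etrans (esym (hl _)) new1).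
- have [new2 _ _] := add_child_deepest he2 hm2.
  by have [q _ /hn1] := @has_leaf_at_eligible t1 _ (etrans (hl _) new2).
- exact: hiso.
Qed.

Lemma step_not_leaf t u : step t b u -> ~ tiso (Node b [::]) u.
Proof.
move=> hstep /has_leaf_at_tiso.
case: hstep => [[p [he hm ->]] | [hn ->]] hl.
  by have [+ _ _] := add_child_deepest he hm; rewrite -hl.
by have [q _ /hn] := @has_leaf_at_eligible t 0 (etrans (esym (hl 0)) (eqxx b)).
Qed.

End Leaves.

Lemma process_tiso_inj (bs : seq event) (t1 t2 u1 u2 : tree) :
  process t1 bs u1 -> process t2 bs u2 -> tiso u1 u2 -> tiso t1 t2.
Proof.
elim: bs t1 t2 => [|c bs IH] t1 t2 /=; first by move=> -> ->.
move=> [m1 [h1 p1]] [m2 [h2 p2]] hiso.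
exact: step_tiso_inj h1 h2 (IH _ _ p1 p2 hiso).
Qed.

Lemma process_cat (t u : tree) (bs1 bs2 : seq event) :
  process t (bs1 ++ bs2) u -> exists2 m, process t bs1 m & process m bs2 u.
Proof.
elim: bs1 t => [|c bs1 IH] t /=; first by exists t.
by case=> tm [hs /IH [m h1 h2]]; exists m => //; exists tm.
Qed.

Lemma witness_tree_split (log : nat -> event) t1 t2 (tau : tree) :
  0 < t1 -> t1 < t2 -> witness_tree log t2 tau ->
  exists t u, step t (log t1) u /\ process u [seq log k | k <- rev (iota 1 t1.-1)] tau.
Proof.
move=> h1 h12; rewrite /witness_tree.
have -> : rev (iota 1 t2.-1) = rev (iota t1.+1 (t2.-1 - t1)) ++ t1 :: rev (iota 1 t1.-1).
  have e2 : t2.-1 = t1.-1 + (t2.-1 - t1).+1 by lia.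
  have e1 : 1 + t1.-1 = t1 by lia.
  by rewrite {1}e2 iotaD rev_cat e1 /= rev_cons cat_rcons.
by rewrite map_cat => /process_cat [m _ /= [u hu]]; exists m, u.
Qed.

End WitnessTrees.

Theorem proposition2p7 (n : nat) (V : finType) (vals : 'I_n -> {set V})
    (Bs : {set event n V})
    (hBs : forall B, B \in Bs ->
             wf_event B /\ (forall z, z \in B -> z.2 \in vals z.1))
    (sigma : nat -> 'I_n -> V) (log : nat -> event n V) (T : nat)
    (hrun : mt_run vals Bs sigma log T)
    (t1 t2 : nat) (h1 : 1 <= t1) (h12 : t1 < t2) (h2T : t2 <= T)
    (tau1 tau2 : tree n V)
    (ht1 : witness_tree log t1 tau1) (ht2 : witness_tree log t2 tau2) :
  ~ tiso tau1 tau2.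
Proof.
move=> hiso.
have [t [u [hstep hrest]]] := witness_tree_split h1 h12 ht2.
exact: step_not_leaf hstep (process_tiso_inj ht1 hrest hiso).
Qed.
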